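(* In the setting of the context, fix two distinct exposures $d_k\ne d_l$ and assume $\pi_{ij}(d_k,d_l)>0$ for all $i\ne j$. Define $$\widehat{\mathrm{Cov}}[\widehat{y^T_{HT}}(d_k),\widehat{y^T_{HT}}(d_l)] = \sum_{i\in U}\sum_{j\in U\setminus\{i\}}\frac{\mathbf{I}(D_i=d_k)\mathbf{I}(D_j=d_l)}{\pi_{ij}(d_k,d_l)}\,\frac{y_i(d_k)}{\pi_i(d_k)}\frac{y_j(d_l)}{\pi_j(d_l)}\big[\pi_{ij}(d_k,d_l)-\pi_i(d_k)\pi_j(d_l)\big] - \sum_{i\in U}\left[\frac{\mathbf{I}(D_i=d_k)y_i(d_k)^2}{2\pi_i(d_k)}+\frac{\mathbf{I}(D_i=d_l)y_i(d_l)^2}{2\pi_i(d_l)}\right].$$ Then $\mathrm{E}\big[\widehat{\mathrm{Cov}}[\widehat{y^T_{HT}}(d_k),\widehat{y^T_{HT}}(d_l)]\big]\le \mathrm{Cov}\big[\widehat{y^T_{HT}}(d_k),\widehat{y^T_{HT}}(d_l)\big]$, and equality holds if $y_i(d_k)=y_i(d_l)$ for all $i\in U$.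
   Context: A finite population $U$ of units $i=1,\dots,N$. A random treatment assignment vector $\mathbf{Z}$ takes values in $\Omega=\{\mathbf{z}\in\{1,\dots,M\}^N:p_{\mathbf{z}}>0\}$ with known probabilities $\Pr(\mathbf{Z}=\mathbf{z})=p_{\mathbf{z}}$. An exposure mapping $f:\Omega\times\Theta\to\Delta=\{d_1,\dots,d_K\}$ with unit traits $\theta_i$ gives exposures $D_i=f(\mathbf{Z},\theta_i)$. Write $\pi_i(d)=\Pr(D_i=d)$ and $\pi_{ij}(d,d')=\Pr(D_i=d,D_j=d')$; assume $0<\pi_i(d_k)<1$ for all $i,k$. Potential outcomes $y_i(d_1),\dots,y_i(d_K)$ are fixed real numbers; the observed outcome is $y_i(D_i)$. The Horvitz–Thompson total estimator is $\widehat{y^T_{HT}}(d)=\sum_{i=1}^N\mathbf{I}(D_i=d)\,y_i(d)/\pi_i(d)$. Expectations and covariances are with respect to the randomization distribution of $\mathbf{Z}$. *)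

From HB Require Import structures.
From mathcomp Require Import all_boot all_order all_algebra.
Set Implicit Arguments. Unset Strict Implicit. Unset Printing Implicit Defensive.
Import Order.TTheory GRing.Theory Num.Theory.
Local Open Scope ring_scope.

(* Treatment assignment vectors z in {1..M}^N, encoded as {ffun 'I_N -> 'I_M}. *)
Definition assignment (N M : nat) := {ffun 'I_N -> 'I_M}.

Definition exposure (N M : nat) (Theta Delta : Type)
  (f : assignment N M -> Theta -> Delta) (theta : 'I_N -> Theta)
  (z : assignment N M) (i : 'I_N) : Delta := f z (theta i).

Definition ind (R : numDomainType) (b : bool) : R := (b : nat)%:R.

Definition Expect (R : numDomainType) (T : finType) (p : T -> R) (X : T -> R) : R :=
  \sum_(z : T) p z * X z.

Definition Covar (R : numDomainType) (T : finType) (p : T -> R) (X Y : T -> R) : R :=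
  Expect p (fun z => X z * Y z) - Expect p X * Expect p Y.

Section Exposures.
Variables (R : realFieldType) (T : finType) (N : nat) (Delta : eqType).
Variable (p : T -> R) (D : T -> 'I_N -> Delta).

Definition pi1 (i : 'I_N) (d : Delta) : R := Expect p (fun z => ind R (D z i == d)).

Definition pi2 (i j : 'I_N) (d d' : Delta) : R :=
  Expect p (fun z => ind R ((D z i == d) && (D z j == d'))).

Variable (y : 'I_N -> Delta -> R).

Definition HT (d : Delta) (z : T) : R :=
  \sum_(i < N) ind R (D z i == d) * y i d / pi1 i d.

Definition CovHat (dk dl : Delta) (z : T) : R :=
  \sum_(i < N) \sum_(j < N | j != i)
     ind R (D z i == dk) * ind R (D z j == dl) / pi2 i j dk dl
     * (y i dk / pi1 i dk) * (y j dl / pi1 j dl)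
     * (pi2 i j dk dl - pi1 i dk * pi1 j dl)
  - \sum_(i < N) (ind R (D z i == dk) * y i dk ^+ 2 / (2 * pi1 i dk)
                  + ind R (D z i == dl) * y i dl ^+ 2 / (2 * pi1 i dl)).
End Exposures.

(* Both [E[CovHat]] and [Cov[HT(d_k), HT(d_l)]] expand into the same sum of
   off-diagonal terms [(pi_ij - pi_i pi_j) (y_i/pi_i) (y_j/pi_j)]; the estimator
   recovers them exactly because it weights each by [1/pi_ij] with [pi_ij > 0].
   What differs are the diagonal terms.  Since [d_k <> d_l], no
   unit has both exposures, so [pi_ii(d_k,d_l) = 0] and the diagonal of the
   covariance is [-sum_i y_i(d_k) y_i(d_l)], while the estimator replaces it by
   [-sum_i (y_i(d_k)^2 + y_i(d_l)^2)/2].  The gap is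
   [sum_i (y_i(d_k) - y_i(d_l))^2 / 2 >= 0], zero when the outcomes agree. *)

From HB Require Import structures.
From mathcomp Require Import all_boot all_order all_algebra.
From mathcomp Require Import ring.

Set Implicit Arguments.
Unset Strict Implicit.
Unset Printing Implicit Defensive.

Import Order.TTheory GRing.Theory Num.Theory.
Local Open Scope ring_scope.

Section Expectation.
Variables (R : numDomainType) (T : finType) (p : T -> R).

Lemma eq_Expect (X Y : T -> R) : X =1 Y -> Expect p X = Expect p Y.
Proof. by move=> eqXY; apply: eq_bigr => z _; rewrite eqXY. Qed.

Lemma ExpectD (X Y : T -> R) :
  Expect p (fun z => X z + Y z) = Expect p X + Expect p Y.
Proof. by rewrite /Expect -big_split; apply: eq_bigr => z _; rewrite mulrDr. Qed.

Lemma ExpectB (X Y : T -> R) :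
  Expect p (fun z => X z - Y z) = Expect p X - Expect p Y.
Proof. by rewrite /Expect -sumrB; apply: eq_bigr => z _; rewrite mulrBr. Qed.

Lemma ExpectZ (c : R) (X : T -> R) :
  Expect p (fun z => c * X z) = c * Expect p X.
Proof. by rewrite /Expect mulr_sumr; apply: eq_bigr => z _; rewrite mulrCA. Qed.

Lemma Expect_sum (I : finType) (P : pred I) (F : I -> T -> R) :
  Expect p (fun z => \sum_(i | P i) F i z) = \sum_(i | P i) Expect p (F i).
Proof. by rewrite /Expect exchange_big; apply: eq_bigr => z _; rewrite mulr_sumr. Qed.

End Expectation.

Lemma ind_andb (R : numDomainType) (a b : bool) : ind R (a && b) = ind R a * ind R b.
Proof. by case: a; rewrite /ind /= ?mul1r ?mul0r. Qed.

Lemma pi2_diag_neq (R : realFieldType) (T : finType) (N : nat) (Delta : eqType)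
    (p : T -> R) (D : T -> 'I_N -> Delta) (i : 'I_N) (d d' : Delta) :
  d != d' -> pi2 p D i i d d' = 0.
Proof.
move=> neq_dd'; rewrite /pi2 /Expect big1 // => z _.
by case: eqP => [->|_]; rewrite ?(negbTE neq_dd') /ind mulr0.
Qed.

Section HorvitzThompson.
Variables (R : realFieldType) (T : finType) (N : nat) (Delta : eqType).
Variables (p : T -> R) (D : T -> 'I_N -> Delta) (y : 'I_N -> Delta -> R).
Hypothesis pi1_gt0 : forall i d, 0 < pi1 p D i d.

Local Notation pi1 := (pi1 p D).
Local Notation pi2 := (pi2 p D).
Local Notation ipw i d := (y i d / pi1 i d).

Lemma pi1_ipwK i d : pi1 i d * ipw i d = y i d.
Proof. by rewrite mulrC divfK // gt_eqF. Qed.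

Lemma Expect_HT d : Expect p (HT p D y d) = \sum_(i < N) y i d.
Proof.
rewrite (@eq_Expect _ _ _ _ (fun z => \sum_(i < N) ipw i d * ind R (D z i == d)));
  last by move=> z; rewrite /HT; apply: eq_bigr => i _; ring.
by rewrite Expect_sum; apply: eq_bigr => i _; rewrite ExpectZ mulrC pi1_ipwK.
Qed.

Lemma Expect_HT_mul d d' :
  Expect p (fun z => HT p D y d z * HT p D y d' z) =
  \sum_(i < N) \sum_(j < N) pi2 i j d d' * (ipw i d * ipw j d').
Proof.
rewrite (@eq_Expect _ _ _ _ (fun z => \sum_(i < N) \sum_(j < N)
    (ipw i d * ipw j d') * ind R ((D z i == d) && (D z j == d')))); last first.
  move=> z; rewrite /HT mulr_suml; apply: eq_bigr => i _; rewrite mulr_sumr.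
  by apply: eq_bigr => j _; rewrite ind_andb; ring.
rewrite Expect_sum; apply: eq_bigr => i _; rewrite Expect_sum.
by apply: eq_bigr => j _; rewrite ExpectZ mulrC.
Qed.

Lemma Covar_HT d d' :
  Covar p (HT p D y d) (HT p D y d') =
  \sum_(i < N) \sum_(j < N)
     (pi2 i j d d' - pi1 i d * pi1 j d') * (ipw i d * ipw j d').
Proof.
rewrite /Covar Expect_HT_mul !Expect_HT mulr_suml -sumrB.
apply: eq_bigr => i _; rewrite mulr_sumr -sumrB; apply: eq_bigr => j _.
by rewrite mulrBl [pi1 i d * _ * _]mulrACA !pi1_ipwK.
Qed.

Variables (dk dl : Delta).
Hypothesis pi2_gt0 : forall i j : 'I_N, i != j -> 0 < pi2 i j dk dl.

Lemma Expect_CovHat :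
  Expect p (CovHat p D y dk dl) =
  \sum_(i < N) \sum_(j < N | j != i)
     (pi2 i j dk dl - pi1 i dk * pi1 j dl) * (ipw i dk * ipw j dl)
  - \sum_(i < N) (y i dk ^+ 2 / 2 + y i dl ^+ 2 / 2).
Proof.
rewrite /CovHat ExpectB Expect_sum; congr (_ - _).
  apply: eq_bigr => i _; rewrite Expect_sum; apply: eq_bigr => j neq_ji.
  rewrite (@eq_Expect _ _ _ _ (fun z =>
      ((pi2 i j dk dl - pi1 i dk * pi1 j dl) * (ipw i dk * ipw j dl)
         / pi2 i j dk dl) * ind R ((D z i == dk) && (D z j == dl)))); last first.
    by move=> z; rewrite ind_andb; ring.
  by rewrite ExpectZ divfK // gt_eqF // pi2_gt0 // eq_sym.
rewrite Expect_sum; apply: eq_bigr => i _.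
rewrite (@eq_Expect _ _ _ _ (fun z =>
    (y i dk ^+ 2 / 2) / pi1 i dk * ind R (D z i == dk)
    + (y i dl ^+ 2 / 2) / pi1 i dl * ind R (D z i == dl))); last first.
  by move=> z; rewrite !invfM; ring.
rewrite ExpectD !ExpectZ !divfK // gt_eqF //.
Qed.

Hypothesis neq_dkdl : dk != dl.

Lemma Covar_HT_offdiag :
  Covar p (HT p D y dk) (HT p D y dl) =
  \sum_(i < N) \sum_(j < N | j != i)
     (pi2 i j dk dl - pi1 i dk * pi1 j dl) * (ipw i dk * ipw j dl)
  - \sum_(i < N) y i dk * y i dl.
Proof.
rewrite Covar_HT -sumrB; apply: eq_bigr => i _.
rewrite (bigD1 i) //= pi2_diag_neq // sub0r mulNr [pi1 i dk * _ * _]mulrACA.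
by rewrite !pi1_ipwK addrC.
Qed.

Lemma Covar_HT_sub_Expect_CovHat :
  Covar p (HT p D y dk) (HT p D y dl) - Expect p (CovHat p D y dk dl) =
  \sum_(i < N) (y i dk - y i dl) ^+ 2 / 2.
Proof.
rewrite Covar_HT_offdiag Expect_CovHat opprB addrC addrA subrK -sumrB.
by apply: eq_bigr => i _; field.
Qed.

End HorvitzThompson.

Theorem mainTheorem2 (R : realFieldType) (N M : nat) (Theta : Type) (Delta : finType)
  (p : assignment N M -> R)
  (p_ge0 : forall z, 0 <= p z)
  (p_sum1 : \sum_(z : assignment N M) p z = 1)
  (f : assignment N M -> Theta -> Delta) (theta : 'I_N -> Theta)
  (y : 'I_N -> Delta -> R)
  (pi_pos : forall i d, 0 < pi1 p (exposure f theta) i d)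
  (pi_lt1 : forall i d, pi1 p (exposure f theta) i d < 1)
  (dk dl : Delta) (hkl : dk != dl)
  (pi2_pos : forall i j : 'I_N, i != j -> 0 < pi2 p (exposure f theta) i j dk dl) :
  let D := exposure f theta in
  Expect p (CovHat p D y dk dl) <= Covar p (HT p D y dk) (HT p D y dl) /\
  ((forall i, y i dk = y i dl) ->
     Expect p (CovHat p D y dk dl) = Covar p (HT p D y dk) (HT p D y dl)).
Proof.
move=> D; have gap := Covar_HT_sub_Expect_CovHat y pi_pos pi2_pos hkl.
split.
  rewrite -subr_ge0 gap; apply: sumr_ge0 => i _.
  by rewrite divr_ge0 ?sqr_ge0.
move=> eq_y; apply/eqP; rewrite eq_sym -subr_eq0 gap big1 // => i _.
by rewrite eq_y subrr expr0n /= mul0r.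
Qed.
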